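(* Let $\epsilon$ be a constant with $0<\epsilon<1/3$. The $(1+1)$~IA$^{hyp}$ finds an optimal solution of the instance $P^*_\epsilon$ (with $n$ even) in $O(n^2)$ expected fitness function evaluations.
   Context: Partition problem: a solution $x\in\{0,1\}^n$ assigns job $i$ to machine $M_1$ if $x_i=0$ and to $M_2$ if $x_i=1$; the makespan $f(x)=\max\{\sum_i p_ix_i,\sum_i p_i(1-x_i)\}$ is minimised. The instance $P^*_\epsilon$ has $n$ jobs with $p_1=p_2=\frac13-\frac{\epsilon}{4}$ and $p_i=\frac{1/3+\epsilon/2}{n-2}$ for $3\le i\le n$. The $(1+1)$~IA$^{hyp}$ (minimisation): initialise $x$ uniformly at random and evaluate it. Each iteration: $y:=x$, $F:=\{1,\dots,n\}$; while $F\ne\emptyset$ and $f(y)\ge f(x)$: pick $i\in F$ uniformly at random, remove it from $F$, flip $y_i$, evaluate $f(y)$; then if $f(y)\le f(x)$ set $x:=y$. Asymptotics are as $n\to\infty$. *)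

From HB Require Import structures.
From mathcomp Require Import all_boot all_order all_algebra.
From mathcomp Require Import reals.
Set Implicit Arguments. Unset Strict Implicit. Unset Printing Implicit Defensive.
Import Order.TTheory GRing.Theory Num.Theory.
Local Open Scope ring_scope.

(* Bit strings of length n: x i = true means job i goes to machine M_2. *)
Definition bits (n : nat) := {ffun 'I_n -> bool}.

Definition makespan (R : realType) (n : nat) (p : 'I_n -> R) (x : bits n) : R :=
  Num.max (\sum_i p i * (x i)%:R) (\sum_i p i * (~~ x i)%:R).

Definition optimal (R : realType) (n : nat) (p : 'I_n -> R) (x : bits n) : bool :=
  [forall z : bits n, makespan p x <= makespan p z].

Definition flip (n : nat) (y : bits n) (i : 'I_n) : bits n :=
  [ffun j => if j == i then ~~ y j else y j].

(* State right after a fitness evaluation: (x, y, F) where x is the current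
   parent, y the point just evaluated, F the set of not-yet-flipped positions
   of the current hypermutation. *)
Definition state (n : nat) := (bits n * bits n * {set 'I_n})%type.

Definition kernel (R : realType) (n : nat) (p : 'I_n -> R) (s s' : state n) : R :=
  let: (x, y, F) := s in
  if (F != set0) && (makespan p x <= makespan p y) then
    (* hypermutation loop continues: flip a fresh random position of F *)
    \sum_(i in F) #|F|%:R^-1 * (s' == (x, flip y i, F :\ i))%:R
  else
    (* loop ends: selection (x := y if f(y) <= f(x)), then new iteration
       starts with y := x, F := {1..n}, and its first flip/evaluation *)
    let x' := if makespan p y <= makespan p x then y else x in
    \sum_i n%:R^-1 * (s' == (x', flip x' i, [set: 'I_n] :\ i))%:R.

(* Distribution of the state after the first evaluation (uniform initial x). *)
Definition init_dist (R : realType) (n : nat) (s : state n) : R :=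
  ((s.1.1 == s.1.2) && (s.2 == set0))%:R * (2 ^ n)%:R^-1.

(* alive k s = Pr[ state after evaluation k+1 is s, and none of the
   evaluations 1..k+1 evaluated an optimal solution ] *)
Fixpoint alive (R : realType) (n : nat) (p : 'I_n -> R) (k : nat) : state n -> R :=
  match k with
  | 0 => fun s => (~~ optimal p s.1.2)%:R * init_dist R s
  | k'.+1 => fun s' =>
      (~~ optimal p s'.1.2)%:R * \sum_(s : state n) alive p k' s * kernel p s s'
  end.

(* surv k = Pr[ T > k ], T = number of evaluations until an optimum is evaluated *)
Definition surv (R : realType) (n : nat) (p : 'I_n -> R) (k : nat) : R :=
  if k is k'.+1 then \sum_(s : state n) alive p k' s else 1.

(* Partial sums of E[T] = sum_{k >= 0} Pr[T > k]. *)
Definition runtime_partial (R : realType) (n : nat) (p : 'I_n -> R) (m : nat) : R :=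
  \sum_(k < m) surv p k.

(* Instance P*_eps (job indices shifted to 0-based). *)
Definition pstar (R : realType) (n : nat) (eps : R) (i : 'I_n) : R :=
  if (i < 2)%N then 1 / 3 - eps / 4 else (1 / 3 + eps / 2) / (n - 2)%:R.

From HB Require Import structures.
From mathcomp Require Import all_boot all_order all_algebra.
From mathcomp Require Import reals.
From mathcomp Require Import zify ring lra.
Set Implicit Arguments. Unset Strict Implicit. Unset Printing Implicit Defensive.
Import Order.TTheory GRing.Theory Num.Theory.
Local Open Scope ring_scope.

(* Additive drift.  In a state (x, y, F) let rank x be the number of makespans
   below f x and improve_prob the probability that the running hypermutation
   stops at a strict improvement of x.  The potential
   A (rank x + 1 - improve_prob) + |F| decreases by exactly 1 in expectation
   at each evaluation inside a hypermutation, and by at least 1 when a new one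
   starts, provided every non-optimal x improves with probability at least
   n / A.  Its range, O(A n), then bounds the expected number of evaluations.

   For P*_eps a non-optimal x improves with probability at least 1 / (4 Q^2),
   where Q depends only on eps.  If a machine holding a big job also holds more
   than half of the small jobs, each flip of one of those small jobs improves,
   so the first flip does with probability at least 1/2.  Otherwise both big
   jobs share a machine M holding at most half of the small jobs; with
   probability at least (j / n)^2, j = (n - 2) / Q, the hypermutation reaches a
   point with one big job on each machine and within j of half of the small
   jobs on M, whose makespan is below f x.  Hence A = 4 Q^2 n gives O(n^2). *)

Lemma sum_delta_mulr (R : numDomainType) (T I : finType) (P : pred I)
    (c : I -> R) (t : I -> T) (G : T -> R) :
  \sum_(s : T) (\sum_(i | P i) c i * (s == t i)%:R) * G s = \sum_(i | P i) c i * G (t i).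
Proof.
under eq_bigr do rewrite mulr_suml.
rewrite exchange_big; apply: eq_bigr => i _.
rewrite (bigD1 (t i)) //= eqxx mulr1 big1 ?addr0 // => s /negbTE ->.
by rewrite mulr0 mul0r.
Qed.

Lemma mul_natD_le (R : numDomainType) (a b : nat) (m X Y : R) :
  ((0 < a)%N -> m <= X) -> ((0 < b)%N -> m <= Y) -> (a + b)%:R * m <= a%:R * X + b%:R * Y.
Proof.
move=> leX leY; rewrite natrD mulrDl lerD //.
  by case: a leX => [|a] leX; rewrite ?mul0r // ler_wpM2l ?leX.
by case: b leY => [|b] leY; rewrite ?mul0r // ler_wpM2l ?leY.
Qed.

Lemma le_two_add_ratio (R : realFieldType) (m s : R) : 1 <= m -> 0 <= s <= m ->
  s + 1 <= 2 + (m - 1) * (s / m).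
Proof.
move=> m_ge1 /andP[s_ge0 s_le]; set t := s / m.
have Et : t * m = s by rewrite /t divfK ?gt_eqF //; lra.
have t_le1 : t <= 1 by rewrite /t ler_pdivrMr ?mul1r //; lra.
nra.
Qed.

Lemma ler_wpdiv2l (R : numFieldType) (a x y : R) : 0 <= a -> 0 < y -> y <= x -> a / x <= a / y.
Proof.
move=> a_ge0 y_gt0 le_yx; apply: ler_wpM2l => //.
by rewrite lef_pV2 ?posrE //; apply: lt_le_trans le_yx.
Qed.



Section Count.
Variable I : finType.

Definition cnt (P : pred I) : nat := \sum_i P i.

Lemma eq_cnt (P Q : pred I) : P =1 Q -> cnt P = cnt Q.
Proof. by move=> eqPQ; apply: eq_bigr => i _; rewrite eqPQ. Qed.

Lemma cntID (P Q : pred I) :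
  (cnt (fun i => P i && Q i) + cnt (fun i => P i && ~~ Q i) = cnt P)%N.
Proof. by rewrite /cnt -big_split; apply: eq_bigr => i _; case: (P i); case: (Q i). Qed.

Lemma cntD_eq (P Q P' Q' : pred I) : (forall i, P i + Q i = P' i + Q' i)%N ->
  (cnt P + cnt Q = cnt P' + cnt Q')%N.
Proof. by move=> eqPQ; rewrite /cnt -!big_split; apply: eq_bigr => i _; apply: eqPQ. Qed.

Lemma cnt0 : cnt (fun _ => false) = 0%N.
Proof. exact: big1. Qed.

Lemma subpred_cnt (P Q : pred I) : subpred P Q -> (cnt P <= cnt Q)%N.
Proof. by move=> subPQ; apply: leq_sum => i _; case: (P i) (subPQ i) => // ->. Qed.

Lemma cnt_pred1 (P : pred I) i : cnt (fun j => (j == i) && P j) = P i.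
Proof. by rewrite /cnt (bigD1 i) //= eqxx big1 ?addn0 // => j /negbTE->. Qed.

Lemma cnt_gt0 (P : pred I) i : P i -> (0 < cnt P)%N.
Proof.
move=> Pi; apply: leq_trans (subpred_cnt (P := fun j => (j == i) && P j) _).
  by rewrite cnt_pred1 Pi.
by move=> j /andP[].
Qed.

Lemma cnt_setD1 (P : pred I) (F : {set I}) i : i \in F ->
  cnt (fun j => (j \in F) && P j) = (cnt (fun j => (j \in F :\ i) && P j) + P i)%N.
Proof.
move=> Fi; rewrite -cnt_pred1 /cnt -big_split; apply: eq_bigr => j _ /=.
by rewrite in_setD1; case: (eqVneq j i) => [->|_] /=; rewrite ?Fi ?addn0.
Qed.

Lemma card_cnt (F : {set I}) : #|F| = cnt (fun i => i \in F).
Proof. by rewrite /cnt -sum1_card big_mkcond /=; apply: eq_bigr => i _; case: (i \in F). Qed.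

Lemma sum_cnt (R : semiRingType) (F : {set I}) (P : pred I) (c : R) :
  \sum_(i in F) (P i)%:R * c = (cnt (fun i => (i \in F) && P i))%:R * c.
Proof.
rewrite /cnt natr_sum mulr_suml big_mkcond /=; apply: eq_bigr => i _.
by case: (i \in F); rewrite ?mul0r.
Qed.

End Count.

Section AdditiveDrift.
Variables (R : realType) (n : nat) (p : 'I_n -> R).
Local Notation f := (makespan p).

(* [improve_prob #|F| x y F] is the probability that the hypermutation in
   progress in state [(x, y, F)] stops at a strict improvement of [x]; the
   first argument is fuel, enough once it reaches [#|F|]. *)
Fixpoint improve_prob (k : nat) (x y : bits n) (F : {set 'I_n}) : R :=
  if (F != set0) && (f x <= f y) then
    if k is k'.+1 then \sum_(i in F) #|F|%:R^-1 * improve_prob k' x (flip y i) (F :\ i)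
    else 0
  else ((f y < f x)%R)%:R.

Lemma improve_prob_stop k x y F : ~~ ((F != set0) && (f x <= f y)) ->
  improve_prob k x y F = ((f y < f x)%R)%:R.
Proof. by move=> stop; case: k => [|k] /=; rewrite (negbTE stop). Qed.

Lemma improve_prob_improved k x y F : f y < f x -> improve_prob k x y F = 1.
Proof. by move=> lt_yx; rewrite improve_prob_stop ?lt_yx // leNgt lt_yx andbF. Qed.

Lemma improve_prob_ge0 k x y F : 0 <= improve_prob k x y F.
Proof.
elim: k y F => [|k IH] y F /=; case: ifP => // _.
by apply: sumr_ge0 => i _; rewrite mulr_ge0 ?invr_ge0.
Qed.

Lemma improve_prob_le1 k x y F : improve_prob k x y F <= 1.
Proof.
elim: k y F => [|k IH] y F /=; case: ifP => [/andP[F0 _]|_]; rewrite ?ler01 ?lern1 ?leq_b1 //.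
have cardF_gt0 : 0 < #|F|%:R :> R by rewrite ltr0n card_gt0.
apply: le_trans (_ : \sum_(i in F) #|F|%:R^-1 <= 1).
  by apply: ler_sum => i _; rewrite ger_pMr ?invr_gt0.
by rewrite sumr_const -[_ *+ #|F|]mulr_natr mulVf ?gt_eqF.
Qed.

Lemma improve_prob_unfold x y F : F != set0 -> f x <= f y ->
  improve_prob #|F| x y F =
  \sum_(i in F) #|F|%:R^-1 * improve_prob #|F :\ i| x (flip y i) (F :\ i).
Proof.
move=> F0 le_xy; have F_gt0 : (0 < #|F|)%N by rewrite card_gt0.
rewrite -[in LHS](prednK F_gt0) /= F0 le_xy /=.
by apply: eq_bigr => i Fi; rewrite (cardsD1 i F) Fi.
Qed.

Definition makespans : seq R := undup [seq f z | z : bits n].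

Definition rank (x : bits n) : nat := count (fun v => v < f x) makespans.

Lemma rank_le_size x : (rank x <= size makespans)%N.
Proof. exact: count_size. Qed.

Lemma rank_lt x y : f y < f x -> (rank y < rank x)%N.
Proof.
move=> lt_yx; rewrite /rank.
pose below t := fun v : R => (v < t)%R.
have fy_in : f y \in makespans by rewrite mem_undup map_f ?mem_enum.
have count_fy : (0 < count (pred1 (f y)) makespans)%N.
  by rewrite -has_count; apply/hasP; exists (f y) => //=.
have no_both : count (predI (below (f y)) (pred1 (f y))) makespans = 0%N.
  apply/eqP; rewrite -leqn0 -(count_pred0 makespans).
  by apply: sub_count => v /andP[+ /eqP eq_v]; rewrite /below eq_v ltxx.
have sub_below : (count (predU (below (f y)) (pred1 (f y))) makespans
                  <= count (below (f x)) makespans)%N.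
  by apply: sub_count => v /orP[lt_vy|/eqP->]; [exact: lt_trans lt_vy lt_yx|].
apply: leq_trans sub_below; have := count_predUI (below (f y)) (pred1 (f y)) makespans.
by rewrite no_both addn0 => ->; rewrite -addn1 leq_add2l.
Qed.

Definition select (x y : bits n) : bits n := if f y <= f x then y else x.

Lemma rank_select x y : (rank (select x y) + (f y < f x)%R <= rank x)%N.
Proof.
rewrite /select; case: ltgtP => [lt_yx|lt_xy|eq_yx].
- by rewrite addn1 rank_lt.
- by rewrite addn0.
- by rewrite addn0 /rank eq_yx.
Qed.

Lemma kernel_ge0 s s' : 0 <= kernel p s s'.
Proof.
case: s => [[x y] F]; rewrite /kernel /=; case: ifP => _;
by apply: sumr_ge0 => i _; rewrite mulr_ge0 ?invr_ge0.
Qed.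

Lemma alive_ge0 k s : 0 <= alive p k s.
Proof.
elim: k s => [|k IH] s /=; rewrite mulr_ge0 //.
  by rewrite /init_dist mulr_ge0 ?invr_ge0.
by apply: sumr_ge0 => s0 _; rewrite mulr_ge0 ?IH ?kernel_ge0.
Qed.

Lemma kernel_parent s s' : kernel p s s' != 0 -> s'.1.1 = s.1.1 \/ s'.1.1 = s.1.2.
Proof.
case: s => [[x y] F] /= K0.
case: (eqVneq s'.1.1 x) => [|neq_x]; first by left.
case: (eqVneq s'.1.1 y) => [|neq_y]; first by right.
exfalso; move/eqP: K0; apply; rewrite /kernel /=; case: ifP => _; apply: big1 => i _.
  by rewrite (_ : s' == _ = false) ?mulr0 //; apply/negbTE/(contra_neq _ neq_x) => ->.
rewrite (_ : s' == _ = false) ?mulr0 //; apply/negbTE.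
by case: ifP => _; [apply: (contra_neq _ neq_y) | apply: (contra_neq _ neq_x)] => ->.
Qed.

Lemma alive_not_optimal k s : alive p k s != 0 -> ~~ optimal p s.1.1 && ~~ optimal p s.1.2.
Proof.
elim: k s => [|k IH] s /=; case opt_y: (optimal p s.1.2); rewrite ?mul0r ?eqxx // mul1r andbT.
  rewrite /init_dist; case: andP => [[/eqP-> _]|_]; first by rewrite opt_y.
  by rewrite mul0r eqxx.
move=> alive_s; have [s0 /= s0_nz|] := pickP (fun s0 => alive p k s0 * kernel p s0 s != 0).
  have /IH/andP[opt_x0 opt_y0] : alive p k s0 != 0 by apply: contraNneq s0_nz => ->; rewrite mul0r.
  have /kernel_parent : kernel p s0 s != 0 by apply: contraNneq s0_nz => ->; rewrite mulr0.
  by case=> ->.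
by move=> all0; move/eqP: alive_s; case; apply: big1 => s0 _; apply/eqP/negbFE/all0.
Qed.

Lemma sum_init_dist : \sum_(s : state n) init_dist R s = 1.
Proof.
rewrite /init_dist -mulr_suml -(pair_bigA _ (fun xy F => ((xy.1 == xy.2) && (F == set0))%:R)) /=.
rewrite (eq_bigr (fun xy : bits n * bits n => (xy.1 == xy.2)%:R)); last first.
  move=> [a b] _; rewrite (bigD1 set0) //= eqxx andbT big1 ?addr0 // => F /negbTE->.
  by rewrite andbF.
rewrite -(pair_bigA _ (fun a b => (a == b)%:R)) /= (eq_bigr (fun _ => 1)); last first.
  move=> a _; rewrite (bigD1 a) //= eqxx big1 ?addr0 // => b.
  by rewrite eq_sym => /negbTE->.
by rewrite sumr_const card_ffun card_bool card_ord mulfV // pnatr_eq0 expn_eq0.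
Qed.

Section Potential.
Variable A : R.
Hypothesis A_ge0 : 0 <= A.

Definition potential (s : state n) : R :=
  let: (x, y, F) := s in A * ((rank x)%:R + 1 - improve_prob #|F| x y F) + #|F|%:R.

Lemma potential_ge0 s : 0 <= potential s.
Proof.
case: s => [[x y] F] /=; rewrite addr_ge0 // mulr_ge0 //.
by have := improve_prob_le1 #|F| x y F; have : 0 <= (rank x)%:R :> R by []; lra.
Qed.

Lemma potential_le s : potential s <= A * (size makespans).+1%:R + n%:R.
Proof.
case: s => [[x y] F] /=; apply: lerD.
  apply: ler_wpM2l => //; have := improve_prob_ge0 #|F| x y F.
  have : (rank x)%:R <= (size makespans)%:R :> R by rewrite ler_nat rank_le_size.
  by rewrite -addn1 natrD; lra.
by rewrite ler_nat -[X in (_ <= X)%N]card_ord max_card.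
Qed.

Lemma potential_flip x y F : F != set0 -> f x <= f y ->
  \sum_s kernel p (x, y, F) s * potential s = potential (x, y, F) - 1.
Proof.
move=> F0 le_xy; rewrite /kernel F0 le_xy /= sum_delta_mulr /= improve_prob_unfold //.
set N := #|F|%:R; set V := (rank x)%:R.
have N0 : N != 0 by rewrite pnatr_eq0 -lt0n card_gt0.
have term i : i \in F ->
    N^-1 * (A * (V + 1 - improve_prob #|F :\ i| x (flip y i) (F :\ i)) + #|F :\ i|%:R)
    = N^-1 * (A * (V + 1) + (N - 1))
      - A * (N^-1 * improve_prob #|F :\ i| x (flip y i) (F :\ i)).
  move=> Fi; have -> : #|F :\ i|%:R = N - 1 by rewrite /N (cardsD1 i F) Fi natrD /=; ring.
  by ring.
rewrite (eq_bigr _ term) sumrB sumr_const -!mulr_sumr -mulr_natr mulrAC mulVf // mul1r.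
by ring.
Qed.

Hypothesis n_gt0 : (0 < n)%N.
Hypothesis improve_start :
  forall x, ~~ optimal p x -> n%:R <= A * improve_prob n x x [set: 'I_n].

Lemma setT_neq0 : [set: 'I_n] != set0.
Proof. by apply/set0Pn; exists (Ordinal n_gt0); rewrite in_setT. Qed.

Lemma kernel_restart x y F : ~~ ((F != set0) && (f x <= f y)) ->
  kernel p (x, y, F) =1 kernel p (select x y, select x y, [set: 'I_n]).
Proof.
move=> stop s; rewrite /kernel (negbTE stop) setT_neq0 lexx /= cardsT card_ord /select.
by apply: eq_bigl => i; rewrite in_setT.
Qed.

Lemma potential_restart x y F : ~~ optimal p x -> ~~ optimal p y ->
  ~~ ((F != set0) && (f x <= f y)) ->
  \sum_s kernel p (x, y, F) s * potential s <= potential (x, y, F) - 1.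
Proof.
move=> opt_x opt_y stop.
under eq_bigr do rewrite (kernel_restart stop).
rewrite potential_flip ?setT_neq0 ?lexx //= cardsT card_ord (improve_prob_stop _ stop).
have opt_sel : ~~ optimal p (select x y) by rewrite /select; case: ifP.
have start := improve_start opt_sel.
have ranks : A * ((rank (select x y))%:R + ((f y < f x)%R)%:R) <= A * (rank x)%:R.
  by rewrite ler_wpM2l // -natrD ler_nat rank_select.
have F_ge0 : 0 <= #|F|%:R :> R by [].
move: start ranks; rewrite !mulrDr !mulrN mulr1; lra.
Qed.

Lemma potential_drift x y F : ~~ optimal p x -> ~~ optimal p y ->
  \sum_s kernel p (x, y, F) s * potential s <= potential (x, y, F) - 1.
Proof.
move=> opt_x opt_y; have [/andP[F0 le_xy]|stop] := boolP ((F != set0) && (f x <= f y)).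
  by rewrite potential_flip.
exact: potential_restart.
Qed.






Definition alive_potential k := \sum_s alive p k s * potential s.

Lemma alive_potential_step k :
  alive_potential k.+1 + \sum_s alive p k s <= alive_potential k.
Proof.
have -> : alive_potential k.+1 = \sum_s alive p k s *
    \sum_(s' : state n) (~~ optimal p s'.1.2)%:R * kernel p s s' * potential s'.
  rewrite /alive_potential /=.
  under eq_bigr do rewrite mulr_sumr mulr_suml.
  rewrite exchange_big; apply: eq_bigr => s _; rewrite mulr_sumr; apply: eq_bigr => s' _.
  by ring.
rewrite -big_split; apply: ler_sum => -[[x y] F] _.
have [->|alive_nz] := eqVneq (alive p k (x, y, F)) 0; first by rewrite /= !mul0r addr0.
case/andP: (alive_not_optimal alive_nz) => opt_x opt_y.
have drift : \sum_s' (~~ optimal p s'.1.2)%:R * kernel p (x, y, F) s' * potential s'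
             <= potential (x, y, F) - 1.
  apply: le_trans (potential_drift F opt_x opt_y); apply: ler_sum => s' _.
  rewrite -mulrA; case: (~~ optimal p s'.1.2); rewrite ?mul1r // mul0r.
  by rewrite mulr_ge0 ?kernel_ge0 ?potential_ge0.
have := ler_wpM2l (alive_ge0 k (x, y, F)) drift.
rewrite mulrBr mulr1 => step; rewrite [leLHS]/=; lra.
Qed.

Lemma sum_alive_le m :
  \sum_(k < m) \sum_s alive p k s <= alive_potential 0 - alive_potential m.
Proof.
elim: m => [|m IH]; first by rewrite big_ord0 subrr.
by rewrite big_ord_recr /=; have := alive_potential_step m; lra.
Qed.

Lemma alive_potential_ge0 k : 0 <= alive_potential k.
Proof. by apply: sumr_ge0 => s _; rewrite mulr_ge0 ?alive_ge0 ?potential_ge0. Qed.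

Lemma alive_potential0_le : alive_potential 0 <= A * (size makespans).+1%:R + n%:R.
Proof.
set bound := _ + _.
apply: le_trans (_ : \sum_(s : state n) init_dist R s * bound <= _); last first.
  by rewrite -mulr_suml sum_init_dist mul1r.
apply: ler_sum => s _ /=.
have init_ge0 : 0 <= init_dist R s by rewrite /init_dist mulr_ge0 ?invr_ge0.
case: (~~ optimal p s.1.2); rewrite ?mul1r ?mul0r; first exact: ler_wpM2l (potential_le s).
by rewrite mulr_ge0 // addr_ge0 ?mulr_ge0.
Qed.

Lemma runtime_partial_le m :
  runtime_partial p m <= 1 + (A * (size makespans).+1%:R + n%:R).
Proof.
have bound_ge0 : 0 <= A * (size makespans).+1%:R + n%:R by rewrite addr_ge0 ?mulr_ge0.
case: m => [|m]; first by rewrite /runtime_partial big_ord0 addr_ge0.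
rewrite /runtime_partial big_ord_recl (eq_bigr (fun k : 'I_m => \sum_s alive p k s)) //.
have := sum_alive_le m; have := alive_potential_ge0 m; have := alive_potential0_le.
by rewrite /surv /=; lra.
Qed.

End Potential.
End AdditiveDrift.

Section PStar.
Variables (R : realType) (n : nat) (eps : R).
Local Notation ps := (@pstar R n eps).
Local Notation f := (makespan ps).

Definition big_job (i : 'I_n) : bool := (i < 2)%N.
Definition w_big : R := 1/3 - eps/4.
Definition w_small : R := (1/3 + eps/2) / (n - 2)%:R.

Definition load_makespan (a c : nat) : R :=
  Num.max (w_big * a%:R + w_small * c%:R)
          (w_big * (2 - a%:R) + w_small * ((n - 2)%:R - c%:R)).

Definition nbig (b : bool) (y : bits n) := cnt (fun i => big_job i && (y i == b)).
Definition nsmall (b : bool) (y : bits n) := cnt (fun i => ~~ big_job i && (y i == b)).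

Lemma sum_pstar (g : 'I_n -> bool) : \sum_i ps i * (g i)%:R =
  w_big * (cnt (fun i => big_job i && g i))%:R
  + w_small * (cnt (fun i => ~~ big_job i && g i))%:R.
Proof.
rewrite /cnt !natr_sum !mulr_sumr -big_split; apply: eq_bigr => i _.
by rewrite /pstar /big_job; case: (i < 2)%N; case: (g i); rewrite /= ?mulr1 ?mulr0 ?addr0 ?add0r.
Qed.

Lemma cnt_big_job : cnt big_job = minn n 2.
Proof.
rewrite /cnt /big_job; elim: n => [|m IH]; first by rewrite big_ord0.
by rewrite big_ord_recr /= IH; case: m {IH} => [|[|m]].
Qed.

Lemma cnt_small_job : cnt (fun i => ~~ big_job i) = (n - 2)%N.
Proof.
have : (cnt big_job + cnt (fun i => ~~ big_job i) = n)%N.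
  rewrite /cnt -big_split /= -[RHS]card_ord -sum1_card.
  by apply: eq_bigr => i _; case: big_job.
by rewrite cnt_big_job; lia.
Qed.

Lemma nbig_compl b y : (2 <= n)%N -> (nbig b y + nbig (~~ b) y = 2)%N.
Proof.
move=> /minn_idPr min2; rewrite -[RHS]min2 -cnt_big_job -(cntID big_job (fun i => y i == b)).
by congr addn; apply: eq_cnt => i; case: (y i); case: b.
Qed.

Lemma nsmall_compl b y : (nsmall b y + nsmall (~~ b) y = n - 2)%N.
Proof.
rewrite -cnt_small_job -(cntID _ (fun i => y i == b)).
by congr addn; apply: eq_cnt => i; case: (y i); case: b.
Qed.

Lemma makespan_counts y : f y = Num.max
  (w_big * (nbig true y)%:R + w_small * (nsmall true y)%:R)
  (w_big * (nbig false y)%:R + w_small * (nsmall false y)%:R).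
Proof.
rewrite /makespan !sum_pstar /nbig /nsmall.
by congr (Num.max (_ * _%:R + _ * _%:R) (_ * _%:R + _ * _%:R)); apply: eq_cnt => i;
  case: (y i); rewrite ?andbT ?andbF.
Qed.

Lemma makespan_pstar b y : (2 <= n)%N -> f y = load_makespan (nbig b y) (nsmall b y).
Proof.
move=> n_ge2.
have nbig_R : (nbig (~~ b) y)%:R = 2 - (nbig b y)%:R :> R.
  by rewrite -(nbig_compl b y n_ge2) natrD; ring.
have nsmall_R : (nsmall (~~ b) y)%:R = (n - 2)%:R - (nsmall b y)%:R :> R.
  by rewrite -(nsmall_compl b y) natrD; ring.
rewrite makespan_counts /load_makespan; case: b nbig_R nsmall_R => /= -> ->; first by [].
by rewrite maxC; congr Num.max; ring.
Qed.

Hypothesis n_ge4 : (4 <= n)%N.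

Lemma n_ge2 : (2 <= n)%N.
Proof. exact: leq_trans n_ge4. Qed.

Lemma w_small_mul : w_small * (n - 2)%:R = 1/3 + eps/2.
Proof. by rewrite /w_small mulrAC -mulrA divff ?mulr1 // pnatr_eq0; lia. Qed.

Lemma load_makespan_ge_half a c : 1/2 <= load_makespan a c.
Proof.
rewrite /load_makespan le_max !mulrBr w_small_mul /w_big.
set X := _ * a%:R; set Y := w_small * c%:R.
by case: (lerP (1/2) (X + Y)) => // ?; apply/orP; right; lra.
Qed.

Lemma size_makespans_pstar : (size (makespans ps) <= 3 * (n - 1))%N.
Proof.
have -> : (3 * (n - 1) = size [seq load_makespan a c | a <- iota 0 3, c <- iota 0 (n - 1)])%N.
  by rewrite size_allpairs !size_iota.
apply: uniq_leq_size (undup_uniq _) _ => v; rewrite mem_undup => /mapP[z _ ->].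
rewrite (makespan_pstar true z n_ge2); apply: allpairs_f; rewrite mem_iota /=.
  by have := nbig_compl true z n_ge2; lia.
by have := nsmall_compl true z; lia.
Qed.

Lemma all_big_of_nbig2 (b : bool) (x : bits n) :
  nbig b x = 2%N -> forall i, big_job i -> x i = b.
Proof.
move=> nbig2 i big_i; apply/eqP/negPn/negP => xi_neq.
have := cntID big_job (fun i => x i == b); rewrite -/(nbig b x) nbig2 cnt_big_job.
have := @cnt_gt0 _ (fun i => big_job i && ~~ (x i == b)) i; rewrite big_i xi_neq => /(_ isT).
have := n_ge4; lia.
Qed.

Lemma nbig2_of_all_big (b : bool) (x : bits n) :
  (forall i, big_job i -> x i = b) -> nbig b x = 2%N.
Proof.
move=> x_big; rewrite -(minn_idPr n_ge2) -cnt_big_job; apply: eq_cnt => i.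
by case big_i: (big_job i); rewrite //= x_big ?eqxx.
Qed.

Lemma makespan_flip_small (x : bits n) (b : bool) i : ~~ big_job i -> x i = b ->
  f (flip x i) = load_makespan (nbig b x) (nsmall b x).-1.
Proof.
move=> small_i xi; rewrite (makespan_pstar b _ n_ge2); congr load_makespan.
  by apply: eq_cnt => j; rewrite ffunE; case: (eqVneq j i) => [->|_]; rewrite ?(negbTE small_i).
have : (nsmall b (flip x i) + cnt (fun j => (j == i) && true)
        = nsmall b x + cnt (fun _ : 'I_n => false))%N.
  apply: cntD_eq => j; rewrite ffunE; case: (eqVneq j i) => [->|] /=; last by rewrite addn0.
  by rewrite small_i xi; case: b {xi}.
by rewrite cnt_pred1 cnt0; lia.
Qed.

Definition small_load (k' p q : nat) : nat := (p + k' - q)%N.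

Section Unflipped.
Variables (x : bits n) (b : bool).

(* The point of a hypermutation of [x] once exactly the positions outside [F]
   have been flipped. *)
Definition flip_outside (F : {set 'I_n}) : bits n :=
  [ffun i => if i \in F then x i else ~~ x i].

Definition nbig_in (F : {set 'I_n}) := cnt (fun i => (i \in F) && big_job i).
Definition nsame_in (F : {set 'I_n}) := cnt (fun i => (i \in F) && (~~ big_job i && (x i == b))).
Definition nother_in (F : {set 'I_n}) := cnt (fun i => (i \in F) && (~~ big_job i && (x i != b))).
Definition nother := cnt (fun i => ~~ big_job i && (x i != b)).

Lemma card_split_in (F : {set 'I_n}) : #|F| = (nbig_in F + nsame_in F + nother_in F)%N.
Proof.
rewrite card_cnt /nbig_in /nsame_in /nother_in /cnt -!big_split; apply: eq_bigr => i _ /=.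
by case: (i \in F); case: big_job; case: (x i == b).
Qed.

Lemma nsmall_nother : (nsmall b x + nother = n - 2)%N.
Proof. by rewrite /nsmall /nother (cntID (fun i => ~~ big_job i)) cnt_small_job. Qed.

Lemma nsame_in_le (F : {set 'I_n}) : (nsame_in F <= nsmall b x)%N.
Proof. by apply: subpred_cnt => i /andP[]. Qed.

Lemma nother_in_le (F : {set 'I_n}) : (nother_in F <= nother)%N.
Proof. by apply: subpred_cnt => i /andP[]. Qed.

Lemma nbig_in_le (F : {set 'I_n}) : (nbig_in F <= 2)%N.
Proof. by rewrite -(minn_idPr n_ge2) -cnt_big_job; apply: subpred_cnt => i /andP[]. Qed.

Lemma flip_outside_setT : flip_outside [set: 'I_n] = x.
Proof. by apply/ffunP => i; rewrite ffunE in_setT. Qed.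

Lemma flip_outside_setD1 (F : {set 'I_n}) i :
  i \in F -> flip_outside (F :\ i) = flip (flip_outside F) i.
Proof.
move=> Fi; apply/ffunP => j; rewrite !ffunE in_setD1.
by case: (eqVneq j i) => [->|] //=; rewrite Fi.
Qed.

Lemma sum_setD1_counts (g : nat -> nat -> nat -> R) (F : {set 'I_n}) :
  \sum_(i in F) g (nbig_in (F :\ i)) (nsame_in (F :\ i)) (nother_in (F :\ i)) =
  (nbig_in F)%:R * g (nbig_in F).-1 (nsame_in F) (nother_in F)
  + (nsame_in F)%:R * g (nbig_in F) (nsame_in F).-1 (nother_in F)
  + (nother_in F)%:R * g (nbig_in F) (nsame_in F) (nother_in F).-1.
Proof.
rewrite -!sum_cnt -!big_split /=; apply: eq_bigr => i Fi.
rewrite /nbig_in /nsame_in /nother_in !(cnt_setD1 _ Fi).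
by case: big_job; case: (x i == b); rewrite /= ?addn0 ?addn1 /= ?mul1r ?mul0r ?addr0 ?add0r.
Qed.

Hypothesis x_big : forall i, big_job i -> x i = b.

Lemma makespan_start : f x = load_makespan 2 (nsmall b x).
Proof.
by rewrite (makespan_pstar b x n_ge2) nbig2_of_all_big.
Qed.

Lemma makespan_flip_outside (F : {set 'I_n}) :
  f (flip_outside F) = load_makespan (nbig_in F) (small_load nother (nsame_in F) (nother_in F)).
Proof.
rewrite (makespan_pstar b _ n_ge2); congr load_makespan.
  apply: eq_cnt => i; rewrite ffunE; case big_i: (big_job i); rewrite ?andbF //.
  by rewrite x_big //= andbT; case: (i \in F); case: b.
have : (nsmall b (flip_outside F) + nother_in F = nsame_in F + nother)%N.
  apply: cntD_eq => i; rewrite ffunE.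
  by case: (i \in F); case: big_job; case: (x i); case: b.
rewrite /small_load; lia.
Qed.

End Unflipped.

Variable h : nat.
Hypothesis n_double : (n - 2 = h.*2)%N.

Lemma load_makespan_balanced : load_makespan 1 h = 1/2.
Proof.
have := w_small_mul; rewrite /load_makespan /w_big n_double -addnn natrD => Ew.
have -> : 2 - 1 = 1 :> R by lra.
rewrite addrK maxxx; move: Ew; rewrite mulrDr; lra.
Qed.

Lemma improve_prob_ge_half (x : bits n) (b : bool) : (h < nsmall b x)%N ->
  (forall i, ~~ big_job i -> x i = b -> f (flip x i) < f x) ->
  1/2 <= improve_prob ps n x x [set: 'I_n].
Proof.
move=> lt_h improving_flip.
have n_gt0 : (0 < n)%N by apply: leq_trans n_ge4.
have := improve_prob_unfold (setT_neq0 n_gt0) (lexx (f x)); rewrite cardsT card_ord => ->.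
apply: le_trans (_ : \sum_(i in [set: 'I_n]) (~~ big_job i && (x i == b))%:R * n%:R^-1 <= _).
  rewrite sum_cnt (eq_cnt (Q := fun i => ~~ big_job i && (x i == b))) => [|i]; last first.
    by rewrite in_setT.
  rewrite -/(nsmall b x) ler_pdivlMr ?ltr0n //.
  have : (n <= (nsmall b x).*2)%N by lia.
  by rewrite -(ler_nat R) -muln2 natrM; lra.
apply: ler_sum => i _; rewrite mulrC ler_wpM2l ?invr_ge0 //.
case: (boolP (~~ big_job i && (x i == b))) => [/andP[small_i /eqP xi]|_] /=.
  by rewrite improve_prob_improved ?improving_flip.
exact: improve_prob_ge0.
Qed.

Hypothesis eps_gt0 : 0 < eps.
Hypothesis eps_lt : eps < 1/3.

Lemma w_small_gt0 : 0 < w_small.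
Proof. by have e_gt0 := eps_gt0; apply: divr_gt0; [lra | rewrite ltr0n; lia]. Qed.


Lemma load_makespan_two c : (c <= n - 2)%N -> load_makespan 2 c = 2 * w_big + w_small * c%:R.
Proof.
move=> le_c; have Ew := w_small_mul; have w_gt0 := w_small_gt0; have e_gt0 := eps_gt0.
have le_cR : c%:R <= (n - 2)%:R :> R by rewrite ler_nat.
have wc_ge0 : 0 <= w_small * c%:R by rewrite mulr_ge0 // ltW.
rewrite /load_makespan max_l; first by rewrite mulrC.
by rewrite /w_big !mulrBr Ew; have := eps_lt; lra.
Qed.

Lemma load_makespan_two_lt c : (1 <= c <= n - 2)%N ->
  load_makespan 2 c.-1 < load_makespan 2 c.
Proof.
case/andP=> c_gt0 le_c; rewrite !load_makespan_two //; last by lia.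
by case: c c_gt0 le_c => // c _ _ /=; rewrite -addn1 natrD; have := w_small_gt0; lra.
Qed.

Lemma load_makespan_one_lt c : (h < c)%N -> load_makespan 1 c.-1 < load_makespan 1 c.
Proof.
case: c => [//|c] lt_hc /=; have := w_small_gt0; have := w_small_mul.
rewrite /load_makespan n_double -addnn -addn1 !natrD.
have : h%:R <= c%:R :> R by rewrite ler_nat.
set H := h%:R; set C := c%:R => le_HC Ew w_gt0.
rewrite lt_max !gt_max; apply/orP; left; apply/andP; split; first lra.
have : 0 < w_small * (C + 1 - (H + H - C)) by apply: mulr_gt0 => //; lra.
lra.
Qed.

Lemma load_makespan_window j z k : (z <= h + j)%N -> (h <= z + j)%N ->
  w_small * (h + j)%:R < w_big -> load_makespan 1 z < load_makespan 2 k.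
Proof.
move=> le_z ge_z window; have := w_small_gt0; have := w_small_mul; have := eps_gt0.
rewrite /load_makespan n_double -addnn => ? Ew w_gt0.
have : z%:R <= (h + j)%:R :> R by rewrite ler_nat.
have : (h + h)%:R - z%:R <= (h + j)%:R :> R by rewrite lerBlDr -natrD ler_nat; lia.
have : 0 <= k%:R :> R by [].
move: window; rewrite /w_big => *.
by rewrite gt_max; apply/andP; split; rewrite lt_max; apply/orP; left; nra.
Qed.

Section WindowBound.
Variables (k k' j : nat).
Hypothesis k_le_h : (k <= h)%N.
Hypothesis k_k' : (k + k' = n - 2)%N.
Hypothesis j_le_h : (j <= h)%N.
Hypothesis window : w_small * (h + j)%:R < w_big.

Let lo := (h - j)%N.
Let hi := (h + j)%N.
Let climb := (n + 1 - (lo + k + 2))%N.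
Let budget := (hi + 1 - k)%N.

Definition improving (u p q : nat) : bool :=
  load_makespan u (small_load k' p q) < load_makespan 2 k.

(* Machine M starts with both big jobs, [k] small jobs and the other machine with
   [k'] small jobs; [u] big jobs, [p] small jobs of M and [q] other small jobs
   are still unflipped, so M now holds [small_load k' p q] small jobs.  This
   lower bound on the probability of improving follows the event that the first
   big flip comes while M holds at most [hi] small jobs, and that M then gets to
   [lo] small jobs before the second big flip. *)
Definition window_bound (u p q : nat) : R :=
  if improving u p q then 1 else
  let r := (u + p + q)%N in
  if u == 2%N then climb%:R / n%:R * ((budget - (n - r))%:R / r%:R)
  else if u == 1%N then (if (small_load k' p q < lo)%N then climb%:R / r%:R else 0)
  else 0.

Lemma window_bound_ge0 u p q : 0 <= window_bound u p q.
Proof.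
rewrite /window_bound; case: ifP => // _; case: ifP => _.
  by rewrite !mulr_ge0 ?invr_ge0.
by case: ifP => _ //; case: ifP => _ //; rewrite divr_ge0.
Qed.

Lemma window_improving p q : (lo <= small_load k' p q <= hi)%N -> improving 1 p q.
Proof.
case/andP=> ge_lo le_hi; apply: (load_makespan_window (j := j)) => //;
  by move: ge_lo le_hi; rewrite /lo /hi; lia.
Qed.

Lemma window_bound_step_one p q : ~~ improving 1 p q ->
  (1 + p + q)%:R * window_bound 1 p q <=
  window_bound 0 p q + p%:R * window_bound 1 p.-1 q + q%:R * window_bound 1 p q.-1.
Proof.
move=> not_imp; rewrite {1}/window_bound (negbTE not_imp) /=.
case: ifP => [below|_]; last by rewrite mulr0 !addr_ge0 ?mulr_ge0 ?window_bound_ge0.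
have climb_le : (0 < climb <= p + q)%N.
  by move: below; rewrite /small_load /climb /lo; lia.
have pq_gt0 : 0 < (p + q)%:R :> R by rewrite ltr0n; lia.
set v : R := climb%:R / (p + q)%:R.
have v_le1 : v <= 1 by rewrite ler_pdivrMr // mul1r ler_nat; lia.
have lower_p : (0 < p)%N -> v <= window_bound 1 p.-1 q.
  move=> p_gt0; rewrite /window_bound; case: ifP => // _ /=.
  rewrite ifT; last by move: below; rewrite /small_load; lia.
  by rewrite (_ : 1 + p.-1 + q = p + q)%N //; lia.
have lower_q : (0 < q)%N -> v <= window_bound 1 p q.-1.
  move=> q_gt0; rewrite /window_bound; case: ifP => // not_imp' /=.
  rewrite (_ : 1 + p + q.-1 = p + q)%N; last by lia.
  case: ifP => // not_below; move/negP: not_imp'; case; apply: window_improving.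
  by move/negbT: not_below; move: below; rewrite /small_load /lo /hi; lia.
have := mul_natD_le lower_p lower_q.
have -> : (p + q)%:R * v = climb%:R by rewrite /v mulrC divfK ?gt_eqF.
have -> : (1 + p + q)%:R * (climb%:R / (1 + p + q)%:R) = climb%:R :> R.
  by rewrite mulrC divfK // pnatr_eq0.
by have := window_bound_ge0 0 p q; lra.
Qed.

Lemma window_bound_step_two p q : (p <= k)%N -> (q <= k')%N -> ~~ improving 2 p q ->
  (2 + p + q)%:R * window_bound 2 p q <=
  2%:R * window_bound 1 p q + p%:R * window_bound 2 p.-1 q + q%:R * window_bound 2 p q.-1.
Proof.
move=> le_p le_q not_imp; rewrite {1}/window_bound (negbTE not_imp) /=.
have rhs_ge0 : 0 <= 2%:R * window_bound 1 p q + p%:R * window_bound 2 p.-1 q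
                    + q%:R * window_bound 2 p q.-1.
  by rewrite !addr_ge0 ?mulr_ge0 ?window_bound_ge0.
have r_le_n : (2 + p + q <= n)%N by lia.
case E: (budget - (n - (2 + p + q)))%N => [|a]; first by rewrite mul0r !mulr0.
have a_lt : (a < 1 + p + q)%N by move: E; rewrite /budget /hi; lia.
have load_le_hi : (small_load k' p q <= hi)%N by move: E; rewrite /small_load /budget /hi; lia.
have E' : (budget - (n - (1 + p + q)) = a)%N by move: E; lia.
have r_gt0 : 0 < (2 + p + q)%:R :> R by rewrite ltr0n.
have r1_gt0 : 0 < (1 + p + q)%:R :> R by rewrite ltr0n.
set c : R := climb%:R / n%:R.
have c_ge0 : 0 <= c by rewrite divr_ge0.
have c_le1 : c <= 1 by rewrite ler_pdivrMr ?mul1r ?ler_nat ?ltr0n; lia.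
set t : R := a%:R / (1 + p + q)%:R.
have t_ge0 : 0 <= t by rewrite divr_ge0.
have ct_le1 : c * t <= 1.
  by rewrite mulr_ile1 // ler_pdivrMr ?mul1r ?ler_nat //; lia.
have lower_u : c <= window_bound 1 p q.
  rewrite /window_bound; case: ifP => // not_imp1 /=; case: ifP => [below|not_below].
    by apply: ler_wpdiv2l; rewrite ?ler_nat //; exact: ltnW.
  move/negP: not_imp1; case; apply: window_improving.
  by rewrite load_le_hi andbT leqNgt not_below.
have lower_p : (0 < p)%N -> c * t <= window_bound 2 p.-1 q.
  move=> p_gt0; rewrite /window_bound; case: ifP => // _ /=.
  by rewrite (_ : 2 + p.-1 + q = 1 + p + q)%N ?E' //; clear -p_gt0; lia.
have lower_q : (0 < q)%N -> c * t <= window_bound 2 p q.-1.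
  move=> q_gt0; rewrite /window_bound; case: ifP => // _ /=.
  by rewrite (_ : 2 + p + q.-1 = 1 + p + q)%N ?E' //; clear -q_gt0; lia.
have interp : a%:R + 1 <= 2 + ((1 + p + q)%:R - 1) * t :> R.
  by apply: le_two_add_ratio; rewrite ?ler0n ?ler_nat ?(ler_nat R 1) //= ltnW.
have := mul_natD_le lower_p lower_q.
have := ler_wpM2l c_ge0 interp.
have := ler_wpM2l (ler0n R 2) lower_u.
have -> : (2 + p + q)%:R * (c * (a.+1%:R / (2 + p + q)%:R)) = c * (a%:R + 1).
  by rewrite mulrCA [(2 + p + q)%:R * _]mulrC divfK ?gt_eqF // natr1.
rewrite !natrD; lra.
Qed.

Lemma window_bound_step u p q : (u <= 2)%N -> (p <= k)%N -> (q <= k')%N ->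
  ~~ improving u p q ->
  (u + p + q)%:R * window_bound u p q <=
  u%:R * window_bound u.-1 p q + p%:R * window_bound u p.-1 q + q%:R * window_bound u p q.-1.
Proof.
case: u => [|[|[|//]]] _ le_p le_q not_imp.
- rewrite {1}/window_bound (negbTE not_imp) /= mulr0 mul0r add0r.
  by rewrite addr_ge0 ?mulr_ge0 ?window_bound_ge0.
- by rewrite mul1r; exact: window_bound_step_one.
- exact: window_bound_step_two.
Qed.

End WindowBound.

Section WindowImprove.
Variables (j : nat) (x : bits n) (b : bool).
Hypothesis j_le_h : (j <= h)%N.
Hypothesis window : w_small * (h + j)%:R < w_big.
Hypothesis x_big : forall i, big_job i -> x i = b.
Hypothesis nsmall_le_h : (nsmall b x <= h)%N.
Let k := nsmall b x.
Let k' := nother x b.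

Lemma improving_flip_outside (F : {set 'I_n}) :
  improving k k' (nbig_in F) (nsame_in x b F) (nother_in x b F) = (f (flip_outside x F) < f x).
Proof. by rewrite /improving -makespan_flip_outside // -makespan_start. Qed.

Lemma window_bound_improving r (F : {set 'I_n}) :
  improving k k' (nbig_in F) (nsame_in x b F) (nother_in x b F) ->
  window_bound k k' j (nbig_in F) (nsame_in x b F) (nother_in x b F)
  <= improve_prob ps r x (flip_outside x F) F.
Proof.
move=> imp; move: (imp); rewrite improving_flip_outside => /improve_prob_improved->.
by rewrite /window_bound imp.
Qed.

Lemma window_bound_le_improve_prob (F : {set 'I_n}) :
  window_bound k k' j (nbig_in F) (nsame_in x b F) (nother_in x b F)
  <= improve_prob ps #|F| x (flip_outside x F) F.
Proof.
move cardF: #|F| => r; elim: r F cardF => [|r IH] F cardF.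
all: have [imp|not_imp] := boolP (improving k k' (nbig_in F) (nsame_in x b F) (nother_in x b F)).
all: try exact: window_bound_improving.
- move/cards0_eq: cardF => F0; subst F; rewrite /window_bound (negbTE not_imp).
  rewrite (_ : nbig_in set0 = 0%N) ?improve_prob_ge0 //.
  by apply: big1 => i _; rewrite in_set0.
- have F0 : F != set0 by rewrite -card_gt0 cardF.
  have le_fx : f x <= f (flip_outside x F) by rewrite leNgt -improving_flip_outside.
  rewrite -cardF improve_prob_unfold //.
  apply: le_trans (_ : \sum_(i in F) #|F|%:R^-1 * window_bound k k' j
    (nbig_in (F :\ i)) (nsame_in x b (F :\ i)) (nother_in x b (F :\ i)) <= _).
    rewrite -mulr_sumr (sum_setD1_counts x b (window_bound k k' j)).
    have cardF0 : #|F|%:R != 0 :> R by rewrite pnatr_eq0 cardF.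
    rewrite -[leLHS](mulKf cardF0) ler_wpM2l ?invr_ge0 // {1}(card_split_in x b).
    apply: window_bound_step => //;
      by rewrite ?nbig_in_le ?nsame_in_le ?nother_in_le ?nsmall_nother.
  apply: ler_sum => i Fi; rewrite ler_wpM2l ?invr_ge0 // -flip_outside_setD1 //.
  have cardFi : #|F :\ i| = r by move: cardF; rewrite (cardsD1 i F) Fi add1n => -[].
  by rewrite cardFi IH.
Qed.

End WindowImprove.

Section Start.
Variable Q : nat.
Hypothesis Q_ge2 : (2 <= Q)%N.
Hypothesis Q_large : (1/3 + eps/2) / Q%:R < 1/6 - eps/2.
Let j := ((n - 2) %/ Q)%N.

Lemma quarter_le_half : (4 * Q ^ 2)%:R^-1 <= 1/2 :> R.
Proof.
have : (1 <= Q ^ 2)%N by rewrite expn_gt0; lia.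
by rewrite mul1r lef_pV2 ?posrE ?ltr0n ?ler_nat //; lia.
Qed.

Lemma divQ_le_half : (j <= h)%N.
Proof.
have : (j * 2 <= j * Q)%N by rewrite leq_mul2l Q_ge2 orbT.
have : (j * Q <= n - 2)%N by apply: leq_divM.
lia.
Qed.

Lemma window_divQ : w_small * (h + j)%:R < w_big.
Proof.
have Q_gt0 : 0 < Q%:R :> R by rewrite ltr0n; lia.
have le_j : w_small * j%:R <= (1/3 + eps/2) / Q%:R.
  rewrite ler_pdivlMr // -w_small_mul -mulrA -natrM.
  by apply: ler_wpM2l; [exact: ltW w_small_gt0 | rewrite ler_nat leq_divM].
have Eh : w_small * h%:R = 1/6 + eps/4.
  by move: w_small_mul; rewrite n_double -muln2 natrM mulrA; lra.
by move: le_j Q_large Eh; rewrite natrD mulrDr /w_big; lra.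
Qed.

Lemma window_bound_start k k' : (k <= h)%N -> (k + k' = n - 2)%N ->
  (4 * Q ^ 2)%:R^-1 <= window_bound k k' j 2 k k'.
Proof.
move=> le_k kk'; have le_j := divQ_le_half.
have n_le : (n <= j.+1 * (2 * Q))%N.
  have : (n - 2 < j.+1 * Q)%N by apply: ltn_ceil; lia.
  by rewrite mulnCA; lia.
have not_imp : improving k k' 2 k k' = false.
  by rewrite /improving /small_load (_ : k + k' - k' = k)%N ?ltxx //; lia.
rewrite /window_bound not_imp /= (_ : 2 + k + k' = n)%N; last by lia.
rewrite subnn subn0.
have n_gt0 : 0 < n%:R :> R by rewrite ltr0n; lia.
have X_ge : (2 * Q)%:R^-1 <= j.+1%:R / n%:R :> R.
  by rewrite ler_pdivlMr // mulrC ler_pdivrMr ?ltr0n -?natrM ?ler_nat //; lia.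
have -> : (4 * Q ^ 2)%:R^-1 = (2 * Q)%:R^-1 * (2 * Q)%:R^-1 :> R.
  by rewrite -invfM -natrM mulnACA.
by apply: ler_pM; rewrite ?invr_ge0 //; apply: le_trans X_ge _;
  rewrite ler_wpM2r ?invr_ge0 // ler_nat; lia.
Qed.

Lemma improve_prob_start_together (x : bits n) (b : bool) :
  (forall i, big_job i -> x i = b) ->
  (4 * Q ^ 2)%:R^-1 <= improve_prob ps n x x [set: 'I_n].
Proof.
move=> x_big; case: (ltnP h (nsmall b x)) => [lt_h|le_h].
  apply: le_trans quarter_le_half (improve_prob_ge_half lt_h _) => i small_i xi.
  rewrite (makespan_flip_small small_i xi) (@makespan_start x b x_big) nbig2_of_all_big //.
  by apply: load_makespan_two_lt; have := nsmall_nother x b; lia.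
have := window_bound_le_improve_prob divQ_le_half window_divQ x_big le_h [set: 'I_n].
rewrite cardsT card_ord flip_outside_setT; apply: le_trans.
rewrite (_ : nbig_in _ = 2%N); last first.
  by rewrite -(minn_idPr n_ge2) -cnt_big_job; apply: eq_cnt => i; rewrite in_setT.
rewrite (_ : nsame_in x b _ = nsmall b x); last by apply: eq_cnt => i; rewrite in_setT.
rewrite (_ : nother_in x b _ = nother x b); last by apply: eq_cnt => i; rewrite in_setT.
by apply: window_bound_start => //; apply: nsmall_nother.
Qed.

Lemma improve_prob_start_apart (x : bits n) (b : bool) :
  nbig b x = 1%N -> (h < nsmall b x)%N ->
  (4 * Q ^ 2)%:R^-1 <= improve_prob ps n x x [set: 'I_n].
Proof.
move=> nbig1 lt_h; apply: le_trans quarter_le_half (improve_prob_ge_half lt_h _) => i small_i xi.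
by rewrite (makespan_flip_small small_i xi) (makespan_pstar b x n_ge2) nbig1 load_makespan_one_lt.
Qed.

Lemma improve_prob_start (x : bits n) : ~~ optimal ps x ->
  (4 * Q ^ 2)%:R^-1 <= improve_prob ps n x x [set: 'I_n].
Proof.
move=> not_opt; have := nbig_compl true x n_ge2; have := nsmall_compl true x.
case nbig_x: (nbig true x) => [|[|[|//]]] /= nsmall_x nbig_x'.
- by apply: (improve_prob_start_together (b := false)); apply: all_big_of_nbig2.
- case: (ltngtP h (nsmall true x)) => [lt_h|gt_h|eq_h].
  + exact: (improve_prob_start_apart nbig_x).
  + by apply: (improve_prob_start_apart (b := false)); lia.
  + case/negP: not_opt; apply/forallP => z.
    rewrite (makespan_pstar true x n_ge2) nbig_x -eq_h load_makespan_balanced.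
    by rewrite (makespan_pstar true z n_ge2) load_makespan_ge_half.
- by apply: (improve_prob_start_together (b := true)); apply: all_big_of_nbig2.
Qed.

End Start.

End PStar.

Lemma exists_nat_div_lt (R : archiFieldType) (a d : R) : 0 <= a -> 0 < d ->
  exists2 Q : nat, (2 <= Q)%N & a / Q%:R < d.
Proof.
move=> a_ge0 d_gt0; have ad_ge0 : 0 <= a / d by rewrite divr_ge0 // ltW.
exists (Num.Def.archi_bound (a / d)).+2 => //.
have : a / d < (Num.Def.archi_bound (a / d)).+2%:R.
  by apply: lt_le_trans (archi_boundP ad_ge0) _; rewrite ler_nat; lia.
by rewrite ltr_pdivrMr // ltr_pdivrMr ?ltr0n // mulrC.
Qed.

Lemma quadratic_bound (Q n s : nat) : (0 < Q)%N -> (0 < n)%N -> (s <= 3 * (n - 1))%N ->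
  ((4 * Q ^ 2 * n * s.+1 + n).+1 <= (12 * Q ^ 2 + 1) * n ^ 2)%N.
Proof.
move=> Q_gt0 n_gt0 le_s; have : (1 <= Q ^ 2)%N by rewrite expn_gt0 Q_gt0.
have : (4 * Q ^ 2 * n * s.+1 <= 4 * Q ^ 2 * n * (3 * n - 2))%N.
  by rewrite leq_mul2l; apply/orP; right; lia.
move: (Q ^ 2)%N => q; nia.
Qed.

Theorem corollary1 (R : realType) (eps : R) :
  0 < eps -> eps < 1 / 3 ->
  exists (C : R) (N0 : nat), 0 < C /\
    forall n : nat, ~~ odd n -> (N0 <= n)%N ->
      forall m : nat, runtime_partial (@pstar R n eps) m <= C * (n ^ 2)%:R.
Proof.
move=> eps_gt0 eps_lt.
have [Q Q_ge2 Q_large] : exists2 Q : nat, (2 <= Q)%N & (1/3 + eps/2) / Q%:R < 1/6 - eps/2.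
  by apply: exists_nat_div_lt; lra.
exists (12 * Q ^ 2 + 1)%:R, 4%N; split=> [|n n_even n_ge4 m]; first by rewrite ltr0n addn1.
have n_double : (n - 2 = ((n - 2)./2).*2)%N.
  by rewrite even_halfK // oddB ?(leq_trans _ n_ge4) // (negbTE n_even).
pose A : R := (4 * Q ^ 2 * n)%:R.
have improve_start x : ~~ optimal (@pstar R n eps) x ->
    n%:R <= A * improve_prob (@pstar R n eps) n x x [set: 'I_n].
  move=> /(improve_prob_start n_ge4 n_double eps_gt0 eps_lt Q_ge2 Q_large) start.
  have -> : n%:R = A * (4 * Q ^ 2)%:R^-1.
    by rewrite /A natrM mulrAC mulfV ?mul1r // pnatr_eq0 muln_eq0 expn_eq0; lia.
  by rewrite ler_wpM2l.
apply: le_trans (runtime_partial_le (ler0n R _) (leq_trans _ n_ge4) improve_start m) _ => //.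
rewrite /A -!natrM -natrD nat1r ler_nat.
rewrite quadratic_bound ?(leq_trans _ n_ge4) ?(leq_trans _ Q_ge2) //.
by apply: size_makespans_pstar.
Qed.
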